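(* Let $\Omega$ be a countable set, $G$ a closed subgroup of $S=\mathrm{Sym}(\Omega)$, and $(\Delta_i)_{i\in I}$ a family of subsets of $\Omega$. Then either (i) there exists a finite set $\Gamma\subseteq\Omega$ such that $G_{(\Gamma)}\le S_{\{\Delta_i\}}$ for all but finitely many $i\in I$, or (ii) there exists $g\in G$ such that $g\notin S_{\{\Delta_i\}}$ for infinitely many $i\in I$. Moreover, if all $\Delta_i$ are finite, then in (i) ''all but finitely many'' can be strengthened to ''all''.
   Context: $\mathrm{Sym}(\Omega)$ is the group of all permutations of $\Omega$ (acting on the right), with the function topology (pointwise convergence, $\Omega$ discrete); ''closed'' means closed in $S$. $G_{(\Gamma)}$ is the pointwise stabilizer of $\Gamma$ in $G$, and $S_{\{\Delta\}}=\{f\in S:\Delta f=\Delta\}$ is the setwise stabilizer. *)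

(* Omega is a countType T; permutations of Omega
   are bijective functions T -> T; sets are Prop-valued predicates. *)
From Stdlib Require List.
From mathcomp Require Import all_boot.
Set Implicit Arguments. Unset Strict Implicit. Unset Printing Implicit Defensive.

Definition in_Sym (T : Type) (f : T -> T) : Prop := bijective f.

Definition is_subgroup_Sym (T : Type) (G : (T -> T) -> Prop) : Prop :=
  [/\ (forall f, G f -> in_Sym f),
      G id,
      (forall f g, G f -> G g -> G (g \o f)) &
      (forall f, G f -> exists2 h, G h & cancel f h /\ cancel h f)].

(* G is closed in Sym(T) for the topology of pointwise convergence (T discrete):
   every permutation f every basic neighbourhood {h | h = f on a finite set A}
   of which meets G lies in G. *)
Definition closed_in_Sym (T : eqType) (G : (T -> T) -> Prop) : Prop :=
  forall f, in_Sym f ->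
    (forall A : seq T, exists2 g, G g & forall x, x \in A -> g x = f x) -> G f.

Definition closed_subgroup_Sym (T : eqType) (G : (T -> T) -> Prop) : Prop :=
  is_subgroup_Sym G /\ closed_in_Sym G.

Definition ptstab (T : eqType) (G : (T -> T) -> Prop) (Gamma : seq T)
  (g : T -> T) : Prop := G g /\ forall x, x \in Gamma -> g x = x.

Definition setstab (T : Type) (Delta : T -> Prop) (f : T -> T) : Prop :=
  in_Sym f /\
  (forall y, (exists2 x, Delta x & f x = y) <-> Delta y).

Definition subgrp_le (T : Type) (H K : (T -> T) -> Prop) : Prop :=
  forall g, H g -> K g.

Definition cofinitely (I : Type) (P : I -> Prop) : Prop :=
  exists s : list I, forall i, ~ List.In i s -> P i.

Definition infinitely_many (I : Type) (P : I -> Prop) : Prop :=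
  ~ exists s : list I, forall i, P i -> List.In i s.

Definition finite_subset (T : Type) (D : T -> Prop) : Prop :=
  exists s : list T, forall x, D x -> List.In x s.

(* Suppose (i) fails. Then for every finite Gamma and every finite set of
   indices there is h in G_(Gamma) moving some further Delta_i. Starting from
   the identity, build g_0, g_1, ... in G: given g_n, take such an h fixing
   Gamma_n and g_n^-1(Gamma_n), and let g_(n+1) be g_n if g_n already moves
   Delta_i, and g_n h otherwise. Then g_(n+1) and its inverse agree with g_n
   and its inverse on Gamma_n, and Gamma_(n+1) is enlarged by the n-th point of
   the countable set Omega and by a point witnessing that Delta_i is moved. The
   g_n converge to a permutation g, which lies in G since G is closed, and g
   moves all the infinitely many Delta_i committed to along the way. When the
   Delta_i are finite, the finitely many exceptions in (i) are absorbed into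
   Gamma. *)

From Stdlib Require List.
From Stdlib Require Import Classical ClassicalEpsilon.
From mathcomp Require Import all_boot.
Set Implicit Arguments. Unset Strict Implicit. Unset Printing Implicit Defensive.

Lemma In_mem (T : eqType) (x : T) (s : seq T) : List.In x s -> x \in s.
Proof. by elim: s => //= y s IHs [->|/IHs xs]; rewrite inE ?eqxx ?xs ?orbT. Qed.

Lemma dependent_choice_nat (A : Type) (P : A -> Prop) (R : nat -> A -> A -> Prop)
    (a0 : A) :
  P a0 -> (forall n a, P a -> exists2 b, P b & R n a b) ->
  exists f : nat -> A, f 0 = a0 /\ forall n, P (f n) /\ R n (f n) (f n.+1).
Proof.
move=> Pa0 extP.
pose next n a := epsilon (inhabits a0) (fun b => P b /\ R n a b).
have nextP n a : P a -> P (next n a) /\ R n a (next n a).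
  move=> Pa; apply: (epsilon_spec (inhabits a0) (fun b => P b /\ R n a b)).
  by have [b] := extP n a Pa; exists b.
pose f := fix f n := if n is m.+1 then next m (f m) else a0.
have Pf n : P (f n) by elim: n => //= n fn; exact: (nextP n _ fn).1.
by exists f; split=> // n; split; last exact: (nextP n _ (Pf n)).2.
Qed.

Lemma infinitely_many_of_NoDup (I : Type) (P : I -> Prop) :
  (forall n, exists L : list I,
     [/\ List.NoDup L, n <= length L & forall i, List.In i L -> P i]) ->
  infinitely_many P.
Proof.
move=> long [s sP]; have [L [uniqL sizeL LP]] := long (length s).+1.
have /leP := List.NoDup_incl_length uniqL (fun i iL => sP i (LP i iL)).
by rewrite leqNgt (leq_trans _ sizeL).
Qed.

Lemma eq_on_later (T : eqType) (U : Type) (D : nat -> seq T) (g : nat -> T -> U) :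
    (forall n, {subset D n <= D n.+1}) -> (forall n, {in D n, g n.+1 =1 g n}) ->
  forall m n, m <= n -> {subset D m <= D n} /\ {in D m, g n =1 g m}.
Proof.
move=> subD eqg m n /subnK <-; elim: (n - m) => [|k [subk eqk]]; first by split.
by split=> [x /subk /subD | x Dx] //; rewrite eqg ?eqk //; apply: subk.
Qed.

Lemma closed_Sym_limit (T : eqType) (G : (T -> T) -> Prop) (g gi : nat -> T -> T)
    (N : T -> nat) :
    closed_in_Sym G -> (forall n, G (g n)) ->
    (forall n, cancel (g n) (gi n)) -> (forall n, cancel (gi n) (g n)) ->
    (forall x n, N x <= n -> g n x = g (N x) x /\ gi n x = gi (N x) x) ->
  G (fun x => g (N x) x).
Proof.
move=> closedG Gg gK giK stable.
pose lim x := g (N x) x; pose limi x := gi (N x) x.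
have limE x n : N x <= n -> g n x = lim x by move=> /(stable x) [].
have limiE x n : N x <= n -> gi n x = limi x by move=> /(stable x) [].
have limK : cancel lim limi.
  move=> x; pose n := maxn (N x) (N (lim x)).
  by rewrite -(limiE _ n (leq_maxr _ _)) -(limE x n (leq_maxl _ _)) gK.
have limiK : cancel limi lim.
  move=> x; pose n := maxn (N x) (N (limi x)).
  by rewrite -(limE _ n (leq_maxr _ _)) -(limiE x n (leq_maxl _ _)) giK.
apply: closedG => [|A]; first exact: Bijective limK limiK.
exists (g (\max_(x <- A) N x)) => // x xA.
by apply: limE; apply: leq_bigmax_seq.
Qed.

Lemma setstabP (T : Type) (D : T -> Prop) (f : T -> T) :
  in_Sym f -> setstab D f <-> forall x, D x <-> D (f x).
Proof.
case=> fi fK fiK; split.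
- case=> _ Df x; split=> [Dx | /Df [y Dy /(can_inj fK) <-] //].
  by apply/Df; exists x.
- move=> Df; split; first exact: Bijective fK fiK.
  move=> y; split=> [[x Dx <-] | Dy]; first exact: (proj1 (Df x)).
  by exists (fi y); rewrite ?fiK //; apply/Df; rewrite fiK.
Qed.

Lemma setstab_of_comp (T : Type) (D : T -> Prop) (g h : T -> T) :
  in_Sym g -> in_Sym h -> setstab D g -> setstab D (g \o h) -> setstab D h.
Proof.
move=> gS hS; rewrite !setstabP //; last exact: bij_comp.
by move=> Dg Dgh x; have := Dg (h x); have := Dgh x; tauto.
Qed.

Lemma ptstab_sub_setstab (T : eqType) (G : (T -> T) -> Prop) (Gamma : seq T)
    (D : T -> Prop) :
    is_subgroup_Sym G -> (forall x, D x -> x \in Gamma) ->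
  subgrp_le (ptstab G Gamma) (setstab D).
Proof.
case=> GS _ _ _ DGamma g [Gg gfix]; rewrite setstabP; last exact: GS.
move=> x; split=> [Dx | Dgx]; first by rewrite gfix ?DGamma.
by have /(bij_inj (GS g Gg)) <- := gfix _ (DGamma _ Dgx).
Qed.

Lemma finite_subset_union (I T : Type) (D : I -> T -> Prop) (s : list I) :
    (forall i, finite_subset (D i)) ->
  finite_subset (fun x => exists2 i, List.In i s & D i x).
Proof.
move=> finD; elim: s => [|i s [l ls]]; first by exists [::] => x [].
have [l' l's] := finD i; exists (l' ++ l) => x [j /= [<- | js] Djx].
  by apply/List.in_or_app; left; apply: l's.
by apply/List.in_or_app; right; apply: ls; exists j.
Qed.

Lemma setstab_all_of_cofinitely (T : eqType) (G : (T -> T) -> Prop) (I : Type)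
    (Delta : I -> T -> Prop) (Gamma : seq T) :
    is_subgroup_Sym G -> (forall i, finite_subset (Delta i)) ->
    cofinitely (fun i => subgrp_le (ptstab G Gamma) (setstab (Delta i))) ->
  exists Gamma' : seq T, forall i, subgrp_le (ptstab G Gamma') (setstab (Delta i)).
Proof.
move=> Gsub finD [s sP]; have [l ls] := finite_subset_union s finD.
exists (Gamma ++ l) => i g [Gg gfix].
case: (classic (List.In i s)) => [i_s | iNs].
  apply: (ptstab_sub_setstab Gsub) (conj Gg gfix) => x Dx.
  have xl : List.In x l by apply: ls; exists i.
  by rewrite mem_cat (In_mem xl) orbT.
by apply: (sP i iNs g); split=> // x xGamma; apply: gfix; rewrite mem_cat xGamma.
Qed.

Section Construction.

Variables (T : countType) (G : (T -> T) -> Prop) (I : Type) (Delta : I -> T -> Prop).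
Hypothesis G_closed : closed_subgroup_Sym G.
Hypothesis not_cofinitely : ~ exists Gamma : seq T,
  cofinitely (fun i => subgrp_le (ptstab G Gamma) (setstab (Delta i))).

Lemma unstable_outside (Gamma : seq T) (s : list I) :
  exists i h, [/\ ~ List.In i s, ptstab G Gamma h & ~ setstab (Delta i) h].
Proof.
apply: NNPP => none; apply: not_cofinitely; exists Gamma, s => i iNs h Gh.
by apply: NNPP => hNstab; apply: none; exists i, h.
Qed.

(* An approximation g_n: ap_dom is Gamma_n, on which every later approximation
   agrees with ap_fun and ap_inv, and ap_bad lists the indices committed to so
   far. *)
Record approx := Approx {
  ap_fun : T -> T; ap_inv : T -> T; ap_dom : seq T; ap_bad : list I }.

Definition approx_ok (a : approx) : Prop :=
  [/\ G (ap_fun a), cancel (ap_fun a) (ap_inv a) & cancel (ap_inv a) (ap_fun a)].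

Definition refines (A : seq T) (a b : approx) : Prop :=
  [/\ {in ap_dom a, ap_fun b =1 ap_fun a}, {in ap_dom a, ap_inv b =1 ap_inv a},
      {subset ap_dom a ++ A <= ap_dom b} &
      exists i, [/\ ap_bad b = i :: ap_bad a, ~ List.In i (ap_bad a) &
        exists2 x, x \in ap_dom b & ~ (Delta i x <-> Delta i (ap_fun b x))]].

Lemma refine_approx (A : seq T) (a : approx) :
  approx_ok a -> exists2 b, approx_ok b & refines A a b.
Proof.
case: a => g gi Gamma L [/= Gg gK giK]; case: G_closed => [[GS _ Gcomp Ginv] _].
have [i [h [iNL [Gh hfix] hNstab]]] := unstable_outside (Gamma ++ map gi Gamma) L.
have [hi _ [hK hiK]] := Ginv h Gh.
(* h also fixes gi(Gamma), so that the inverse of g \o h agrees with gi on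
   Gamma. *)
have [k [ki [[Gk kK kiK] kg kig kNstab]]] : exists k ki,
    [/\ [/\ G k, cancel k ki & cancel ki k], {in Gamma, k =1 g},
        {in Gamma, ki =1 gi} & ~ setstab (Delta i) k].
  case: (classic (setstab (Delta i) g)) => [gstab | gNstab]; last by exists g, gi.
  exists (g \o h), (hi \o gi); split.
  - by split; [exact: Gcomp | exact: can_comp | exact: can_comp].
  - by move=> x xG /=; rewrite hfix // mem_cat xG.
  - move=> x xG /=; have hgix : h (gi x) = gi x.
      by rewrite hfix // mem_cat map_f ?orbT.
    by rewrite -{1}hgix hK.
  - move=> ghstab; apply: hNstab.
    exact: setstab_of_comp (GS _ Gg) (GS _ Gh) gstab ghstab.
have [x kx] : exists x, ~ (Delta i x <-> Delta i (k x)).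
  by apply: not_all_ex_not => kstab; apply: kNstab; apply/(setstabP _ (GS k Gk)).
exists (Approx k ki (x :: Gamma ++ A) (i :: L)); first by split.
split=> //= [y yGA | ]; first by rewrite inE yGA orbT.
by exists i; split=> //; exists x; rewrite ?inE ?eqxx.
Qed.

Section Limit.

Variable f : nat -> approx.
Hypothesis f0 : f 0 = Approx id id [::] [::].
Hypothesis f_refines : forall n,
  approx_ok (f n) /\ refines (seq_of_opt (pickle_inv n)) (f n) (f n.+1).

Definition stage (x : T) : nat := (pickle x).+1.

Lemma mem_dom_stage x : x \in ap_dom (f (stage x)).
Proof.
have [_ [_ _ sub _]] := f_refines (pickle x).
by apply: sub; rewrite mem_cat pickleK_inv inE eqxx orbT.
Qed.

Lemma dom_agree m n : m <= n ->
  [/\ {subset ap_dom (f m) <= ap_dom (f n)},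
      {in ap_dom (f m), ap_fun (f n) =1 ap_fun (f m)} &
      {in ap_dom (f m), ap_inv (f n) =1 ap_inv (f m)}].
Proof.
have sub k : {subset ap_dom (f k) <= ap_dom (f k.+1)}.
  by have [_ [_ _ subk _]] := f_refines k => x xd; apply: subk; rewrite mem_cat xd.
have efun k : {in ap_dom (f k), ap_fun (f k.+1) =1 ap_fun (f k)}.
  by have [_ []] := f_refines k.
have einv k : {in ap_dom (f k), ap_inv (f k.+1) =1 ap_inv (f k)}.
  by have [_ []] := f_refines k.
move=> mn; have [subn efunn] := eq_on_later sub efun mn.
by have [_ einvn] := eq_on_later sub einv mn.
Qed.

Definition limit (x : T) : T := ap_fun (f (stage x)) x.

Lemma limitE n : {in ap_dom (f n), limit =1 ap_fun (f n)}.
Proof.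
move=> x xd; have [_ efun1 _] := dom_agree (leq_maxl n (stage x)).
have [_ efun2 _] := dom_agree (leq_maxr n (stage x)).
by rewrite /limit -(efun2 x (mem_dom_stage x)) efun1.
Qed.

Lemma limit_in_G : G limit.
Proof.
apply: (@closed_Sym_limit _ _ (fun n => ap_fun (f n)) (fun n => ap_inv (f n))
  stage).
- exact: G_closed.2.
- by move=> n; have [[]] := f_refines n.
- by move=> n; have [[]] := f_refines n.
- by move=> n; have [[]] := f_refines n.
- move=> x n xn; have [_ efun einv] := dom_agree xn.
  by rewrite efun ?einv ?mem_dom_stage.
Qed.

Lemma bad_not_setstab n j : List.In j (ap_bad (f n)) -> ~ setstab (Delta j) limit.
Proof.
elim: n => [|n IHn]; first by rewrite f0.
have [_ [_ _ _ [i [-> _ [x xd xbad]]]]] := f_refines n.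
case=> [<- | /IHn //] jstab; apply: xbad; rewrite -(limitE xd).
exact: (proj1 (setstabP _ jstab.1) jstab x).
Qed.

Lemma bad_NoDup_length n :
  List.NoDup (ap_bad (f n)) /\ length (ap_bad (f n)) = n.
Proof.
elim: n => [|n [uniqn sizen]]; first by rewrite f0; split; first constructor.
have [_ [_ _ _ [i [-> iN _]]]] := f_refines n.
by split; [constructor | rewrite /= sizen].
Qed.

Lemma limit_unstable : infinitely_many (fun i => ~ setstab (Delta i) limit).
Proof.
apply: infinitely_many_of_NoDup => n; exists (ap_bad (f n)).
have [uniqn sizen] := bad_NoDup_length n.
by split=> //; [rewrite sizen | exact: bad_not_setstab].
Qed.

End Limit.

Lemma exists_unstable :
  exists2 g, G g & infinitely_many (fun i => ~ setstab (Delta i) g).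
Proof.
have start_ok : approx_ok (Approx id id [::] [::]) by case: G_closed => [[]].
have [f [f0 f_refines]] := dependent_choice_nat
  (R := fun n => refines (seq_of_opt (pickle_inv n))) start_ok
  (fun n => @refine_approx _).
by exists (limit f); [exact: limit_in_G | exact: limit_unstable].
Qed.

End Construction.

Theorem lemma11p2 (T : countType) (G : (T -> T) -> Prop)
  (I : Type) (Delta : I -> T -> Prop) :
  closed_subgroup_Sym G ->
  ((exists Gamma : seq T,
       cofinitely (fun i => subgrp_le (ptstab G Gamma) (setstab (Delta i))))
   \/ (exists2 g, G g & infinitely_many (fun i => ~ setstab (Delta i) g)))
  /\
  ((forall i, finite_subset (Delta i)) ->
   (exists Gamma : seq T,
       forall i, subgrp_le (ptstab G Gamma) (setstab (Delta i)))
   \/ (exists2 g, G g & infinitely_many (fun i => ~ setstab (Delta i) g))).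
Proof.
move=> G_closed; case: (classic (exists Gamma : seq T,
  cofinitely (fun i => subgrp_le (ptstab G Gamma) (setstab (Delta i)))))
  => [[Gamma cof] | not_cof].
  split; first by left; exists Gamma.
  by move=> finD; left; apply: setstab_all_of_cofinitely G_closed.1 finD cof.
by have unstable := exists_unstable G_closed not_cof; split; right.
Qed.
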